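(* Let $d\ge2$ and $k>p\ge1$ be integers. If $T$ is chosen uniformly at random from $\mathcal{C}_k^{(d)}$, then the probability that each of the generations $1,2,\dots,p$ of $T$ contains at most one internal vertex is at least $e^{-p}$.
   Context: A $d$-Catalan tree is a rooted planar tree in which each vertex has $0$ or $d$ children (those with $d$ children are internal); $\mathcal{C}_k^{(d)}$ is the set of such trees with $k$ internal vertices. Generation $j$ is the set of vertices at graph distance $j$ from the root. *)

From Stdlib Require Import Reals.
From Stdlib Require List.
From mathcomp Require Import ssreflect ssrfun ssrbool eqtype ssrnat seq.

(* Rooted planar (ordered) trees: a vertex with an ordered list of children.
   A leaf is [PNode [::]]. *)
Inductive ptree : Type := PNode of seq ptree.

Definition children (t : ptree) : seq ptree := let: PNode cs := t in cs.

Definition is_internal (t : ptree) : bool := size (children t) != 0.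

Fixpoint is_dcat (d : nat) (t : ptree) : bool :=
  let: PNode cs := t in
  ((size cs == 0) || (size cs == d)) && all (is_dcat d) cs.

Fixpoint n_internal (t : ptree) : nat :=
  let: PNode cs := t in (size cs != 0) + sumn (map n_internal cs).

Fixpoint gen_internal (j : nat) (t : ptree) : nat :=
  let: PNode cs := t in
  match j with
  | 0 => (size cs != 0) : nat
  | j'.+1 => sumn (map (gen_internal j') cs)
  end.

Definition in_Ckd (d k : nat) (t : ptree) : bool := is_dcat d t && (n_internal t == k).

Definition thin_up_to (p : nat) (t : ptree) : bool :=
  all (fun j => gen_internal j t <= 1) (iota 1 p).

(* The trees of C_k^(d) whose generations 1, ..., p each contain at most one
   internal vertex are exactly the trees obtained by stacking p internal
   vertices on a path from the root, each choosing which of its d children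
   continues the path, on top of an arbitrary tree of C_(k-p)^(d).  Hence there
   are d^p C_(k-p) of them, where C_n = #|C_n^(d)| is the Fuss-Catalan number
   (dn)! / (n! ((d-1)n+1)!), read off from the ballot count a/(dn+a) C(dn+a, n)
   of sequences of a such trees with n internal vertices in total, which obeys
   the recurrence obtained by deleting the root of the first tree.  Comparing
   factorials gives
   C_(n+1) (d-1)^(d-1) <= d^d C_n, and (d/(d-1))^(d-1) <= e, so
   C_k <= (e d)^p C_(k-p): the proportion d^p C_(k-p) / C_k is at least e^-p. *)

From Stdlib Require Import Reals Lra.
From Stdlib Require List.
From mathcomp Require Import ssreflect ssrfun ssrbool eqtype ssrnat seq.
From mathcomp Require Import binomial zify ring.

(* seq's map, filter, iota and size are convertible to Stdlib's List functions,
   so the List lemmas about In and NoDup apply to them directly. *)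

Definition leaf : ptree := PNode [::].

Lemma all_leaves ts : ~~ has is_internal ts -> ts = nseq (size ts) leaf.
Proof. by elim: ts => //= -[[|? ?]] ts IHts //= /IHts {1}->. Qed.

Lemma n_internal_gt0_internal t : 0 < n_internal t -> is_internal t.
Proof. by case: t => [[]]. Qed.

Lemma gen_internal1 cs : gen_internal 1 (PNode cs) = count is_internal cs.
Proof. by elim: cs => //= -[[|? ?]] cs ->. Qed.

Definition is_dforest (d n a : nat) (f : seq ptree) : bool :=
  [&& size f == a, all (is_dcat d) f & sumn (map n_internal f) == n].

(* Peel off the first tree: it is a leaf, or its root is deleted and its d
   subtrees are put in front of the remaining trees. *)
Fixpoint dforests (d n : nat) {struct n} : nat -> seq (seq ptree) :=
  fix dforests_n a := match a with
  | 0 => if n is 0 then [:: [::]] else [::]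
  | a'.+1 =>
      [seq leaf :: f | f <- dforests_n a'] ++
      if n is n'.+1 then [seq PNode (take d f) :: drop d f | f <- dforests d n' (a' + d)]
      else [::]
  end.

Definition nforests d n a := size (dforests d n a).

Section Forests.

Context {d : nat} (d_gt0 : 0 < d).

Lemma is_dforest0 n f : is_dforest d n 0 f = nilp f && (n == 0).
Proof. by case: f => [|? ?]; rewrite /is_dforest //= eq_sym. Qed.

Lemma is_dforest_node n a cs f : size cs = d ->
  is_dforest d n a.+1 (PNode cs :: f) = (0 < n) && is_dforest d n.-1 (a + d) (cs ++ f).
Proof.
move=> size_cs; have d_neq0 : (d != 0) = true by rewrite -lt0n.
rewrite /is_dforest /= size_cat size_cs eqxx d_neq0 orbT all_cat map_cat sumn_cat.
rewrite [d + _]addnC eqn_add2r eqSS -addnA add1n.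
by case: n => [|n]; rewrite ?andbF.
Qed.

Lemma dforestsS n a : dforests d n a.+1 =
  [seq leaf :: f | f <- dforests d n a] ++
  if n is n'.+1 then [seq PNode (take d f) :: drop d f | f <- dforests d n' (a + d)]
  else [::].
Proof. by case: n. Qed.

Lemma is_dforest_cons n a cs f : is_dforest d n a.+1 (PNode cs :: f) ->
  cs = [::] \/ size cs = d.
Proof. by case/and3P=> _ /andP[/andP[/orP[/nilP|/eqP]]]; [left|right]. Qed.

Lemma dforestsP n a f : List.In f (dforests d n a) <-> is_dforest d n a f.
Proof.
elim: n a f => [|n IHn] a f; elim: a f => [|a IHa] f.
all: try by rewrite is_dforest0; case: f => [|? ?] /=; intuition.
all: rewrite dforestsS List.in_app_iff; split.
- by case=> // /List.in_map_iff[g [<- /IHa]].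
- case: f => [|[cs] f] // /[dup] /is_dforest_cons[->|size_cs].
    by left; apply/List.in_map_iff; exists f; split => //; apply/IHa.
  by rewrite is_dforest_node.
- case=> /List.in_map_iff[g [<-]]; first by move/IHa.
  move=> /IHn /[dup] /and3P[/eqP size_g _ _].
  have size_take : size (take d g) = d by rewrite size_takel // size_g leq_addl.
  by rewrite is_dforest_node // cat_take_drop.
- case: f => [|[cs] f] // /[dup] /is_dforest_cons[->|size_cs].
    by left; apply/List.in_map_iff; exists f; split => //; apply/IHa.
  rewrite is_dforest_node // => /IHn in_csf; right; apply/List.in_map_iff.
  by exists (cs ++ f); rewrite take_size_cat ?drop_size_cat.
Qed.

Lemma dforests_NoDup n a : List.NoDup (dforests d n a).
Proof.
elim: n a => [|n IHn] a; elim: a => [|a IHa]; rewrite ?dforestsS ?cats0.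
all: try by repeat constructor.
- by apply: List.NoDup_map_NoDup_ForallPairs => // f g _ _ [].
have size_split g : List.In g (dforests d n (a + d)) -> size (take d g) = d.
  by case/dforestsP/and3P => /eqP size_g _ _; rewrite size_takel // size_g leq_addl.
apply: List.NoDup_app.
- by apply: List.NoDup_map_NoDup_ForallPairs => // f g _ _ [].
- apply: List.NoDup_map_NoDup_ForallPairs => // f g /size_split sf /size_split sg [ef eg].
  by rewrite -(cat_take_drop d f) -(cat_take_drop d g) ef eg.
- move=> _ /List.in_map_iff[f [<- _]] /List.in_map_iff[g [[take_nil _] /size_split]].
  by rewrite take_nil /=; lia.
Qed.

Lemma nforests0 a : nforests d 0 a = 1.
Proof. by elim: a => // a; rewrite /nforests dforestsS cats0 size_map. Qed.

Lemma nforestsS0 n : nforests d n.+1 0 = 0.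
Proof. by []. Qed.

Lemma nforestsSS n a : nforests d n.+1 a.+1 = nforests d n.+1 a + nforests d n (a + d).
Proof. by rewrite /nforests dforestsS size_cat !size_map. Qed.

Lemma nforests_ballot n a : nforests d n a * (d * n + a) = a * 'C(d * n + a, n).
Proof.
have [q d_eq] : exists q, d = q.+1 by exists d.-1; lia.
elim: n a => [|n IHn] a; first by rewrite nforests0 muln0 bin0 mul1n muln1.
elim: a => [|a IHa]; first by rewrite nforestsS0.
rewrite nforestsSS addnS binS.
set N := d * n.+1 + a; set X := nforests d n.+1 a; set Y := nforests d n (a + d).
have {}IHn : Y * N = (a + d) * 'C(N, n).
  by rewrite (_ : N = d * n + (a + d)) ?IHn // /N mulnS; lia.
have pascal := mul_bin_left N n.
set B := 'C(N, n) in IHn pascal *; set B' := 'C(N, n.+1) in IHa pascal *.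
have N_sub_n : N - n = q * n.+1 + a.+1 by rewrite /N d_eq mulSn; lia.
rewrite N_sub_n in pascal.
apply/eqP; rewrite -(eqn_pmul2l (_ : 0 < N * n.+1)); last by rewrite /N d_eq; lia.
apply/eqP.
have -> : N * n.+1 * ((X + Y) * N.+1) = N.+1 * (n.+1 * (X * N) + n.+1 * (Y * N)) by ring.
rewrite IHa IHn.
have -> : N.+1 * (n.+1 * (a * B') + n.+1 * ((a + d) * B)) =
          N.+1 * (a * (n.+1 * B') + n.+1 * (a + d) * B) by ring.
have -> : N * n.+1 * (a.+1 * (B' + B)) = N * a.+1 * (n.+1 * B' + n.+1 * B) by ring.
by rewrite pascal /N d_eq; ring.
Qed.

End Forests.

Definition fuss_catalan d n := nforests d n 1.

Lemma fuss_catalan_factE q n :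
  fuss_catalan q.+1 n * (n`! * (q * n).+1`!) = (q.+1 * n)`!.
Proof.
have := nforests_ballot (ltn0Sn q) n 1; rewrite mul1n addn1 => ballot.
have := @bin_fact (q.+1 * n).+1 n; rewrite -ballot factS.
rewrite (_ : (q.+1 * n).+1 - n = (q * n).+1); last by rewrite mulSn; lia.
have n_le : n <= (q.+1 * n).+1 by rewrite mulSn; lia.
by move=> /(_ n_le); rewrite mulnAC mulnC => /eqP; rewrite eqn_pmul2l // => /eqP.
Qed.

Lemma fact_shift_ratio_le x y A B j : x <= y -> x * A <= y * B ->
  (A + j)`! * B`! * x ^ j <= y ^ j * A`! * (B + j)`!.
Proof.
move=> le_xy le_xAyB; elim: j => [|j IHj]; first by rewrite !addn0 !expn0 muln1 mul1n.
have step : (A + j).+1 * x <= y * (B + j).+1.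
  by rewrite mulnC -!addnS !mulnDr leq_add // leq_mul2r le_xy orbT.
rewrite !addnS !factS !expnS.
apply: leq_trans (leq_trans (leq_mul step IHj) _); apply/eq_leq; ring.
Qed.

Lemma fuss_catalan_succ_le q m :
  fuss_catalan q.+1 m.+1 * q ^ q <= q.+1 ^ q.+1 * fuss_catalan q.+1 m.
Proof.
set A := q.+1 * m; set B := (q * m).+1.
have factE0 := fuss_catalan_factE q m.
have factE1 := fuss_catalan_factE q m.+1.
have e1 : q.+1 * m.+1 = (A + q).+1 by rewrite /A mulnS; lia.
have e2 : (q * m.+1).+1 = B + q by rewrite /B mulnS; lia.
rewrite e1 e2 in factE1.
have P_gt0 : 0 < m.+1`! * (B + q)`! * B`! by rewrite !muln_gt0 !fact_gt0.
rewrite -(leq_pmul2r P_gt0).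
have -> : fuss_catalan q.+1 m.+1 * q ^ q * (m.+1`! * (B + q)`! * B`!) =
          fuss_catalan q.+1 m.+1 * (m.+1`! * (B + q)`!) * B`! * q ^ q by ring.
have -> : q.+1 ^ q.+1 * fuss_catalan q.+1 m * (m.+1`! * (B + q)`! * B`!) =
          q.+1 * m.+1 * (q.+1 ^ q * (fuss_catalan q.+1 m * (m`! * B`!)) * (B + q)`!).
  by rewrite [m.+1`!]factS expnS; ring.
rewrite factE0 factE1 e1 factS -!mulnA leq_mul2l; apply/orP; right.
have le_qA : q * A <= q.+1 * B by rewrite /A /B mulnCA mulnS leq_addl.
by have := @fact_shift_ratio_le q q.+1 A B q (leqnSn q) le_qA; rewrite -!mulnA.
Qed.

Lemma fuss_catalan_gt0 d n : 0 < d -> 0 < fuss_catalan d n.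
Proof.
move=> d_gt0; have := nforests_ballot d_gt0 n 1; rewrite mul1n addn1 => ballot.
have : 0 < 'C((d * n).+1, n) by rewrite bin_gt0 leqW // leq_pmull.
by rewrite -ballot muln_gt0 => /andP[].
Qed.

Definition graft (d i : nat) (c : ptree) : ptree :=
  PNode (nseq i leaf ++ c :: nseq (d.-1 - i) leaf).

Section Graft.

Context {d : nat}.

Lemma sumn_map_leaves (f : ptree -> nat) k : f leaf = 0 -> sumn (map f (nseq k leaf)) = 0.
Proof. by move=> f_leaf; rewrite map_nseq sumn_nseq f_leaf. Qed.

Lemma gen_internal_leaf j : gen_internal j leaf = 0.
Proof. by case: j. Qed.

Lemma gen_internal_graft i c j : gen_internal j.+1 (graft d i c) = gen_internal j c.
Proof.
by rewrite /= map_cat sumn_cat /= !sumn_map_leaves ?gen_internal_leaf // add0n addn0.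
Qed.

Lemma n_internal_graft i c : n_internal (graft d i c) = (n_internal c).+1.
Proof.
by rewrite /= size_cat /= addnS map_cat sumn_cat /= !sumn_map_leaves // add0n addn0 add1n.
Qed.

Lemma is_dcat_graft i c : i < d -> is_dcat d (graft d i c) = is_dcat d c.
Proof.
move=> lt_id; rewrite /= size_cat /= !size_nseq all_cat /= !all_nseq /=.
by rewrite (_ : i + (d.-1 - i).+1 = d) ?eqxx ?orbT ?andbT //; lia.
Qed.

Lemma gen_internal0_le1 t : gen_internal 0 t <= 1.
Proof. by case: t => cs /=; case: (size cs != 0). Qed.

Lemma thin_up_toS j t :
  thin_up_to j.+1 t = all (fun g => gen_internal g.+1 t <= 1) (iota 0 j.+1).
Proof. by rewrite /thin_up_to (iotaDl 1 0) all_map. Qed.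

Lemma thin_up_to_graft i c j : thin_up_to j.+1 (graft d i c) = thin_up_to j c.
Proof.
rewrite thin_up_toS; under eq_all do rewrite gen_internal_graft.
by rewrite /= gen_internal0_le1.
Qed.

Lemma graft_inj i i' c c' : is_internal c -> is_internal c' ->
  graft d i c = graft d i' c' -> (i, c) = (i', c').
Proof.
have find_graft j e : is_internal e -> find is_internal (children (graft d j e)) = j.
  by move=> int_e; rewrite /= find_cat has_nseq andbF size_nseq /= int_e addn0.
have nth_graft j e : nth leaf (children (graft d j e)) j = e.
  by rewrite /= nth_cat size_nseq ltnn subnn.
move=> int_c int_c' eq_graft.
have eq_i : i = i' by rewrite -(find_graft i c) // -(find_graft i' c') // eq_graft.
by rewrite -(nth_graft i c) eq_graft eq_i nth_graft.
Qed.

Lemma exists_graft t : is_dcat d t -> 1 < n_internal t -> gen_internal 1 t <= 1 ->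
  exists i c, [/\ i < d, is_internal c & t = graft d i c].
Proof.
case: t => cs /andP[size_cs _] n_gt1; rewrite gen_internal1 => count_le1.
have has_int : has is_internal cs.
  apply/negPn/negP => /all_leaves cs_leaves; move: n_gt1.
  by rewrite cs_leaves /= sumn_map_leaves //; case: (_ != 0).
have size_cs_d : size cs = d.
  by case/orP: size_cs => /eqP // /size0nil cs_nil; rewrite cs_nil in has_int.
set i := find is_internal cs; set c := nth leaf cs i.
have lt_id : i < d by rewrite -size_cs_d -has_find.
have int_c : is_internal c by apply: nth_find.
have cs_split : cs = take i cs ++ c :: drop i.+1 cs.
  by rewrite -drop_nth ?cat_take_drop // size_cs_d.
move: count_le1; rewrite cs_split count_cat /= int_c => count_le1.
have /all_leaves take_leaves : ~~ has is_internal (take i cs) by rewrite has_count; lia.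
have /all_leaves drop_leaves : ~~ has is_internal (drop i.+1 cs) by rewrite has_count; lia.
rewrite size_takel ?size_cs_d 1?ltnW // in take_leaves.
rewrite size_drop size_cs_d in drop_leaves.
exists i, c; split => //.
by rewrite take_leaves drop_leaves /graft; congr (PNode (_ ++ _ :: nseq _ _)); lia.
Qed.

End Graft.

Lemma NoDup_list_prod {A B : Type} (s : seq A) (s' : seq B) :
  List.NoDup s -> List.NoDup s' -> List.NoDup (List.list_prod s s').
Proof.
elim=> [|x s0 x_notin_s _ IHs] uniq_s' //=; first by constructor.
apply: List.NoDup_app.
- by apply: List.NoDup_map_NoDup_ForallPairs => // y y' _ _ [].
- exact: IHs.
- by move=> _ /List.in_map_iff[y [<- _]] /List.in_prod_iff[].
Qed.

Lemma NoDup_size_eq {A : Type} {s s' : seq A} : List.NoDup s -> List.NoDup s' ->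
  (forall x, List.In x s <-> List.In x s') -> size s = size s'.
Proof.
move=> uniq_s uniq_s' eq_s; apply/eqP; rewrite eqn_leq.
by apply/andP; split; apply/leP; apply: List.NoDup_incl_length => // x /eq_s.
Qed.

Definition dtrees d n : seq ptree := [seq head leaf f | f <- dforests d n 1].

Fixpoint thin_dtrees d j m : seq ptree :=
  if j is j'.+1 then
    [seq graft d ic.1 ic.2 | ic <- List.list_prod (iota 0 d) (thin_dtrees d j' m.-1)]
  else dtrees d m.

Section Enumerations.

Context {d : nat} (d_gt0 : 0 < d).

Lemma dtreesP n t : List.In t (dtrees d n) <-> in_Ckd d n t.
Proof.
split.
- case/List.in_map_iff => -[|t' [|? ?]] [<- /(dforestsP d_gt0)] //.
  by rewrite /is_dforest /= andbT addn0.
- move=> Ckd_t; apply/List.in_map_iff; exists [:: t]; split => //.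
  by apply/(dforestsP d_gt0); rewrite /is_dforest /= addn0 andbT.
Qed.

Lemma dtrees_NoDup n : List.NoDup (dtrees d n).
Proof.
apply: List.NoDup_map_NoDup_ForallPairs (dforests_NoDup d_gt0 n 1).
move=> f f' /(dforestsP d_gt0)/and3P[/eqP size_f _ _].
move=> /(dforestsP d_gt0)/and3P[/eqP size_f' _ _].
by case: f size_f => [|t [|]] //; case: f' size_f' => [|t' [|]] //= _ _ ->.
Qed.

Lemma size_dtrees n : size (dtrees d n) = fuss_catalan d n.
Proof. by rewrite size_map. Qed.

Lemma thin_dtreesP j m t : j < m ->
  List.In t (thin_dtrees d j m) <-> in_Ckd d m t && thin_up_to j t.
Proof.
elim: j m t => [|j IHj] [|m] t //= lt_jm; first by rewrite andbT dtreesP.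
rewrite /in_Ckd; split.
- case/List.in_map_iff => -[i c] [<- /List.in_prod_iff[/List.in_seq lt_id /(IHj _ _ lt_jm)]].
  rewrite is_dcat_graft ?n_internal_graft ?thin_up_to_graft ?eqSS //=; lia.
- case/andP=> /andP[dcat_t /eqP n_t] thin_t.
  have n_gt1 : 1 < n_internal t by rewrite n_t; lia.
  have gen1_le1 : gen_internal 1 t <= 1 by case/andP: thin_t.
  have [i [c [lt_id _ t_eq]]] := exists_graft t dcat_t n_gt1 gen1_le1; subst t.
  move: dcat_t n_t thin_t; rewrite is_dcat_graft // n_internal_graft thin_up_to_graft.
  move=> dcat_c [n_c] thin_c; apply/List.in_map_iff; exists (i, c); split => //.
  apply/List.in_prod_iff; split; first by apply/List.in_seq; lia.
  by apply/IHj; rewrite // /in_Ckd dcat_c n_c eqxx.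
Qed.

Lemma thin_dtrees_NoDup j m : j < m -> List.NoDup (thin_dtrees d j m).
Proof.
elim: j m => [|j IHj] [|m] lt_jm //=; first exact: dtrees_NoDup.
apply: List.NoDup_map_NoDup_ForallPairs; last first.
  exact: NoDup_list_prod (List.seq_NoDup _ _) (IHj _ lt_jm).
have int_thin c : List.In c (thin_dtrees d j m) -> is_internal c.
  move=> /(thin_dtreesP j m c lt_jm)/andP[/andP[_ /eqP n_c] _].
  apply: n_internal_gt0_internal; lia.
move=> [i c] [i' c'] /List.in_prod_iff[_ /int_thin int_c].
by move=> /List.in_prod_iff[_ /int_thin int_c']; apply: graft_inj.
Qed.

End Enumerations.

Lemma size_thin_dtrees d j m : size (thin_dtrees d j m) = d ^ j * fuss_catalan d (m - j).
Proof.
elim: j m => [|j IHj] m; first by rewrite size_dtrees subn0 mul1n.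
rewrite /= size_map (List.length_prod _ _ : size _ = size _ * size _).
rewrite size_iota IHj expnS mulnA.
by congr (_ * fuss_catalan d _); lia.
Qed.

Section RealBounds.

Local Open Scope R_scope.

Lemma INR_muln m n : INR (m * n) = INR m * INR n.
Proof. exact: mult_INR. Qed.

Lemma INR_expn m n : INR (m ^ n) = INR m ^ n.
Proof. by elim: n => [|n IHn]; rewrite ?expnS ?INR_muln ?IHn. Qed.

Lemma exp_pow x n : exp x ^ n = exp (INR n * x).
Proof.
elim: n => [|n IHn]; first by rewrite Rmult_0_l exp_0.
by rewrite S_INR /= IHn -exp_plus Rmult_plus_distr_r Rmult_1_l Rplus_comm.
Qed.

Lemma pow_succ_le_exp n : INR n.+1 ^ n <= exp 1 * INR n ^ n.
Proof.
case: n => [|n]; first by have := exp_ineq1_le 1; rewrite /=; lra.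
set x := INR n.+1; have x_gt0 : 0 < x by apply: lt_0_INR; lia.
rewrite (_ : INR n.+2 = x * (1 + / x)); last first.
  by rewrite Rmult_plus_distr_l Rmult_1_r Rinv_r; [exact: S_INR | lra].
rewrite Rpow_mult_distr Rmult_comm; apply: Rmult_le_compat_r; first by apply: pow_le; lra.
have inv_x_gt0 : 0 < / x by apply: Rinv_0_lt_compat.
apply: Rle_trans (pow_incr _ _ _ (conj _ (exp_ineq1_le (/ x)))) _; first by lra.
rewrite exp_pow -/x Rinv_r; [exact: Rle_refl | lra].
Qed.

Lemma fuss_catalan_succ_leR q m :
  INR (fuss_catalan q.+1 m.+1) <= exp 1 * INR q.+1 * INR (fuss_catalan q.+1 m).
Proof.
have := fuss_catalan_succ_le q m => /leP/le_INR; rewrite !INR_muln !INR_expn.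
rewrite -tech_pow_Rmult => ratio.
have qq_gt0 : 0 < INR q ^ q.
  by case: q {ratio} => [|q]; [rewrite /=; lra | apply/pow_lt/lt_0_INR; lia].
have q1_ge0 := pos_INR q.+1; have C_ge0 := pos_INR (fuss_catalan q.+1 m).
have := Rmult_le_compat_l _ _ _ (Rmult_le_pos _ _ q1_ge0 C_ge0) (pow_succ_le_exp q).
by move=> e_bound; apply: (Rmult_le_reg_r (INR q ^ q)) => //; lra.
Qed.

Lemma fuss_catalan_sub_leR q k p : (p <= k)%N ->
  INR (fuss_catalan q.+1 k) <= (exp 1 * INR q.+1) ^ p * INR (fuss_catalan q.+1 (k - p)).
Proof.
elim: p => [|p IHp] le_pk; first by rewrite subn0 /=; lra.
have c_ge0 : 0 <= (exp 1 * INR q.+1) ^ p.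
  by apply/pow_le/Rmult_le_pos; [apply/Rlt_le/exp_pos | apply: pos_INR].
apply: Rle_trans (IHp (ltnW le_pk)) _.
rewrite (_ : k - p = (k - p.+1).+1)%N -?tech_pow_Rmult; last by lia.
have := Rmult_le_compat_l _ _ _ c_ge0 (fuss_catalan_succ_leR q (k - p.+1)).
lra.
Qed.

Lemma exp_le_fuss_catalan_ratio q k p : (p <= k)%N ->
  exp (- INR p) <= INR (q.+1 ^ p * fuss_catalan q.+1 (k - p)) / INR (fuss_catalan q.+1 k).
Proof.
move=> le_pk.
have Ck_gt0 : 0 < INR (fuss_catalan q.+1 k) by apply/lt_0_INR/ltP/fuss_catalan_gt0.
rewrite -(Rmult_div_l (exp (- INR p)) (INR (fuss_catalan q.+1 k))); last by lra.
apply: Rmult_le_compat_r; first by apply/Rlt_le/Rinv_0_lt_compat.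
have := Rmult_le_compat_l _ _ _ (Rlt_le _ _ (exp_pos (- INR p))) (fuss_catalan_sub_leR q k p le_pk).
rewrite Rpow_mult_distr exp_pow Rmult_1_r -!Rmult_assoc -exp_plus Rplus_opp_l exp_0.
by rewrite Rmult_1_l INR_muln INR_expn.
Qed.

End RealBounds.

Theorem corollary5p3 (d k p : nat) (s : seq ptree) :
  2 <= d -> 1 <= p -> p < k ->
  List.NoDup s ->
  (forall t : ptree, List.In t s <-> in_Ckd d k t) ->
  (Rle (exp (Ropp (INR p)))
       (Rdiv (INR (count (thin_up_to p) s)) (INR (size s)))).
Proof.
move=> le2d _ lt_pk uniq_s s_Ckd.
have [q d_eq] : exists q, d = q.+1 by exists d.-1; lia.
have d_gt0 : 0 < d by rewrite d_eq.
have size_s : size s = fuss_catalan d k.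
  rewrite -size_dtrees; apply: NoDup_size_eq uniq_s (dtrees_NoDup d_gt0 k) _ => t.
  by rewrite s_Ckd dtreesP.
have count_s : count (thin_up_to p) s = d ^ p * fuss_catalan d (k - p).
  rewrite -size_filter -size_thin_dtrees.
  apply: NoDup_size_eq => [||t]; first exact: List.NoDup_filter.
    exact: thin_dtrees_NoDup.
  by rewrite List.filter_In s_Ckd thin_dtreesP //; split=> [[-> ->] | /andP[-> ->]].
by rewrite size_s count_s d_eq; apply: exp_le_fuss_catalan_ratio; apply: ltnW.
Qed.
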